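(* Let $k\ge 1$. (i) For any $i\in\{1,\dots,k\}$, if a language $L$ is recognized by some $\mathrm{rtDVA}(k)^i_1$, then $L$ is recognized by some $\mathrm{rtDVA}(k)$. (ii) For any $c\in\mathbb{Q}$, if a language $L$ is recognized by some $\mathrm{rtDVA}(k)^1_c$, then $L$ is recognized by some $\mathrm{rtDVA}(k+1)$.
   Context: A real-time deterministic vector automaton of dimension $k$ ($\mathrm{rtDVA}(k)$) is a 6-tuple $\mathcal{V}=(Q,\Sigma,\delta,q_0,Q_a,v)$ where $Q$ is a finite set of states, $q_0\in Q$ the initial state, $Q_a\subseteq Q$ the accept states, $\Sigma$ the input alphabet, $v\in\mathbb{Q}^k$ an initial row vector (freely chosen by the designer), and $\delta:Q\times(\Sigma\cup\{\cent,\$\})\times\{=,\neq\}\to Q\times S$, where $S$ is the set of $k\times k$ rational matrices. On input $w$, the machine reads $\cent w\$$ from left to right, one symbol per step, starting in $q_0$ with vector $v$. If it is in state $q$, reads symbol $\sigma$, and $\omega$ is ''$=$'' iff the first entry of the current vector equals $1$ (and ''$\neq$'' otherwise), and $\delta(q,\sigma,\omega)=(q',M)$, it moves to $q'$ and replaces the current row vector $x$ by $xM$. The input is accepted iff after processing $\$$ the state is in $Q_a$ and the first entry of the vector equals $1$. For $i\in\{1,\dots,k\}$ and $c\in\mathbb{Q}$, an $\mathrm{rtDVA}(k)^i_c$ is defined identically except that every test (both the value $\omega$ used in transitions and the final acceptance test) checks whether the $i$-th entry of the vector equals $c$ instead of whether the first entry equals $1$. *)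

From HB Require Import structures.
From mathcomp Require Import all_boot all_order all_algebra.
Set Implicit Arguments. Unset Strict Implicit. Unset Printing Implicit Defensive.
Import Order.TTheory GRing.Theory Num.Theory.
Local Open Scope ring_scope.

Inductive tsym (S : Type) := Cent | Dollar | Letter of S.
Arguments Cent {S}. Arguments Dollar {S}. Arguments Letter {S} _.

(* The boolean argument of delta is omega: true means "=" (the tested
   entry equals the tested constant), false means "<>". *)
Record rtDVA (Q S : finType) (k : nat) := RtDVA {
  q0 : Q;
  acc : pred Q;
  v0 : 'rV[rat]_k;
  delta : Q -> tsym S -> bool -> Q * 'M[rat]_k
}.

Definition step (Q S : finType) (k : nat) (V : rtDVA Q S k)
  (i : 'I_k) (c : rat) (cfg : Q * 'rV[rat]_k) (a : tsym S) :=
  let: (q, x) := cfg in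
  let: (q', M) := delta V q a (x 0 i == c) in (q', x *m M).

Definition run (Q S : finType) (k : nat) (V : rtDVA Q S k)
  (i : 'I_k) (c : rat) (w : seq S) : Q * 'rV[rat]_k :=
  foldl (step V i c) (q0 V, v0 V) (Cent :: map Letter w ++ [:: Dollar]).

Definition accepts_ic (Q S : finType) (k : nat) (V : rtDVA Q S k)
  (i : 'I_k) (c : rat) (w : seq S) : bool :=
  let: (q, x) := run V i c w in acc V q && (x 0 i == c).

Definition recognized_ic (S : finType) (k : nat) (i : 'I_k) (c : rat)
  (L : seq S -> Prop) : Prop :=
  exists (Q : finType) (V : rtDVA Q S k),
    forall w, L w <-> accepts_ic V i c w.

(* Language recognized by some rtDVA(k) (test: first entry equals 1);
   defined only for k >= 1, written as k.+1. *)
Definition recognized (S : finType) (k : nat) (L : seq S -> Prop) : Prop :=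
  @recognized_ic S k.+1 ord0 1 L.

From mathcomp Require Import all_boot all_order all_algebra all_fingroup.
Local Open Scope ring_scope.
Import GRing.Theory.

Set Implicit Arguments.
Unset Strict Implicit.
Unset Printing Implicit Defensive.

(* A machine can be simulated by one whose vectors are the images [f x] of
   the original vectors, provided [f] turns right multiplication by [M] into
   right multiplication by [g M] and translates the test faithfully.
   (i) Conjugating by the permutation matrix swapping entries [0] and [i]
   moves the tested entry to position [0].
   (ii) The affine map [x |-> x + (1 - c) e_0], which turns the test
   "entry 0 is c" into "entry 0 is 1", becomes linear once a constant
   coordinate 1 is prepended; then (i) moves the tested entry to the front. *)

Section Simulation.
Variables (Q S : finType) (n m : nat) (V : rtDVA Q S n).
Variables (i : 'I_n) (c : rat) (i' : 'I_m) (c' : rat).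
Variables (f : 'rV[rat]_n -> 'rV[rat]_m) (g : 'M[rat]_n -> 'M[rat]_m).
Hypothesis f_mulmx : forall x M, f (x *m M) = f x *m g M.
Hypothesis f_test : forall x, (f x 0 i' == c') = (x 0 i == c).

Definition sim_rtDVA : rtDVA Q S m :=
  RtDVA (q0 V) (acc V) (f (v0 V))
    (fun q a b => let: (q', M) := delta V q a b in (q', g M)).

Lemma foldl_step_sim s q x :
  foldl (step sim_rtDVA i' c') (q, f x) s =
  let: (q', y) := foldl (step V i c) (q, x) s in (q', f y).
Proof.
elim: s q x => [|a s IHs] q x //=.
rewrite /step /= f_test; case: (delta V q a (x 0 i == c)) => q' M.
by rewrite -f_mulmx IHs.
Qed.

Lemma accepts_ic_sim w : accepts_ic sim_rtDVA i' c' w = accepts_ic V i c w.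
Proof.
rewrite /accepts_ic /run [q0 _]/= [v0 _]/= [acc _]/= foldl_step_sim.
by case: foldl => q y; rewrite f_test.
Qed.

End Simulation.

Lemma recognized_ic_sim (S : finType) (n m : nat) (i : 'I_n) (c : rat)
    (i' : 'I_m) (c' : rat) (f : 'rV[rat]_n -> 'rV[rat]_m)
    (g : 'M[rat]_n -> 'M[rat]_m) (L : seq S -> Prop) :
  (forall x M, f (x *m M) = f x *m g M) ->
  (forall x, (f x 0 i' == c') = (x 0 i == c)) ->
  recognized_ic i c L -> recognized_ic i' c' L.
Proof.
move=> f_mulmx f_test [Q [V HV]]; exists Q, (sim_rtDVA V f g) => w.
by rewrite (accepts_ic_sim V f_mulmx f_test).
Qed.

Lemma recognized_ic_ord0 (S : finType) (k : nat) (i : 'I_k.+1) (c : rat)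
    (L : seq S -> Prop) :
  recognized_ic i c L -> recognized_ic (ord0 : 'I_k.+1) c L.
Proof.
pose P : 'M[rat]_k.+1 := tperm_mx ord0 i.
have PP : P *m P = 1%:M by rewrite -perm_mxM tperm2 perm_mx1.
apply: (@recognized_ic_sim _ _ _ _ _ _ _ (mulmxr P) (fun M => P *m M *m P)).
  by move=> x M; rewrite /= !mulmxA -(mulmxA x P P) PP mulmx1.
by move=> x; rewrite /= -xcolE !mxE tpermL.
Qed.

Lemma recognized_ic_extend (S : finType) (k : nat) (c : rat)
    (L : seq S -> Prop) :
  recognized_ic (ord0 : 'I_k.+1) c L ->
  recognized_ic (lift ord0 (ord0 : 'I_k.+1)) 1 L.
Proof.
rewrite -rshift1.
pose d : 'rV[rat]_k.+1 := (1 - c) *: delta_mx 0 ord0.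
apply: (@recognized_ic_sim _ _ _ _ _ _ _
  (fun x => row_mx 1 (x + d)) (fun M => block_mx 1 (d - d *m M) 0 M)).
  move=> x M; rewrite mul_row_block mulmx0 mul1mx addr0 mulmxDl mul1mx.
  by rewrite addrCA subrK addrC.
by move=> x; rewrite row_mxEr !mxE /= mulr1 addrA addrAC -subr_eq0 addrK subr_eq0.
Qed.

Theorem theorem1 (S : finType) (k : nat) :
  (forall (i : 'I_k.+1) (L : seq S -> Prop),
      recognized_ic i 1 L -> recognized k L) /\
  (forall (c : rat) (L : seq S -> Prop),
      recognized_ic (ord0 : 'I_k.+1) c L -> recognized k.+1 L).
Proof.
split=> [i L | c L] recL; first exact: recognized_ic_ord0 recL.
exact: recognized_ic_ord0 (recognized_ic_extend recL).
Qed.
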